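(* Let $\mathcal{C},\mathcal{D}$ be $k$-linear Grothendieck categories and $F:\mathcal{C}\to\mathcal{D}$ a ($k$-linear, colimit preserving) functor with a left adjoint $L:\mathcal{D}\to\mathcal{C}$ and a right adjoint $R:\mathcal{D}\to\mathcal{C}$ (both $k$-linear and colimit preserving). The following are equivalent: (i) $R$ is a left quasi-adjoint of $F$; (ii) $R$ is a direct summand of a finite direct sum $L^{n}=\coprod_{i=1}^nL$ of copies of $L$ in the category of $k$-linear functors $\mathcal{D}\to\mathcal{C}$ and natural transformations, i.e. there are natural transformations $a:R\to L^n$, $b:L^n\to R$ with $b\circ a=\mathrm{id}_R$; (iii) $F$ is a left quasi-adjoint of $L$.
   Context: $k$ is a commutative ring. For functors $X:\mathcal{D}\to\mathcal{C}$ and $Y:\mathcal{C}\to\mathcal{D}$ (colimit preserving), $X$ is a left quasi-adjoint of $Y$ if there are $n\in\mathbb{N}$ and natural transformations $\eta:\mathrm{id}_{\mathcal{D}}\to\coprod_{i=1}^nYX$ and $\zeta:\coprod_{i=1}^nXY\to\mathrm{id}_{\mathcal{C}}$ such that $\zeta_{XD}\circ X\eta_D=\mathrm{id}_{XD}$ for all objects $D$ of $\mathcal{D}$ (using $X(\coprod YXD)\cong\coprod XYXD$). In (iii) this is applied with the roles of the two categories interchanged: $F:\mathcal{C}\to\mathcal{D}$ is a left quasi-adjoint of $L:\mathcal{D}\to\mathcal{C}$ if there are $\eta:\mathrm{id}_{\mathcal{C}}\to\coprod^nLF$, $\zeta:\coprod^nFL\to\mathrm{id}_{\mathcal{D}}$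 with $\zeta_{FC}\circ F\eta_C=\mathrm{id}_{FC}$ for all $C$. *)

From HB Require Import structures.
From mathcomp Require Import all_boot all_algebra.
Set Implicit Arguments.
Unset Strict Implicit.
Unset Printing Implicit Defensive.
Import GRing.Theory.
Local Open Scope ring_scope.

Record Cat := {
  cob : Type;
  chom : cob -> cob -> Type;
  cid : forall a, chom a a;
  ccomp : forall a b c, chom b c -> chom a b -> chom a c;
  ccomp_idl : forall a b (f : chom a b), ccomp (cid b) f = f;
  ccomp_idr : forall a b (f : chom a b), ccomp f (cid a) = f;
  ccomp_assoc : forall a b c d (f : chom a b) (g : chom b c) (h : chom c d),
      ccomp h (ccomp g f) = ccomp (ccomp h g) f }.
Arguments chom : clear implicits.
Arguments cid {J} a : rename.
Arguments ccomp {J a b c} : rename.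

Record kCat (k : comPzRingType) := {
  ob : Type;
  hom : ob -> ob -> lmodType k;
  idm : forall a, hom a a;
  comp : forall a b c, hom b c -> hom a b -> hom a c;
  comp_idl : forall a b (f : hom a b), comp (idm b) f = f;
  comp_idr : forall a b (f : hom a b), comp f (idm a) = f;
  comp_assoc : forall a b c d (f : hom a b) (g : hom b c) (h : hom c d),
      comp h (comp g f) = comp (comp h g) f;
  comp_linl : forall a b c (f : hom a b) (r : k) (g h : hom b c),
      comp (r *: g + h) f = r *: comp g f + comp h f;
  comp_linr : forall a b c (h : hom b c) (r : k) (f g : hom a b),
      comp h (r *: f + g) = r *: comp h f + comp h g }.
Arguments ob {k} C : rename.
Arguments hom {k C} : rename.
Arguments idm {k C} a : rename.
Arguments comp {k C a b c} : rename.

Section Cats.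
Variable k : comPzRingType.

Record Diagram (J : Cat) (C : kCat k) := {
  dob : cob J -> ob C;
  dmap : forall i j, chom J i j -> hom (dob i) (dob j);
  dmap_id : forall i, dmap (cid i) = idm (dob i);
  dmap_comp : forall i j l (u : chom J i j) (v : chom J j l),
      dmap (ccomp v u) = comp (dmap v) (dmap u) }.

Definition IsCocone (J : Cat) (C : kCat k) (A : cob J -> ob C)
  (m : forall i j, chom J i j -> hom (A i) (A j)) (X : ob C)
  (c : forall j, hom (A j) X) : Prop :=
  forall i j (u : chom J i j), comp (c j) (m i j u) = c i.

Definition IsColimit (J : Cat) (C : kCat k) (A : cob J -> ob C)
  (m : forall i j, chom J i j -> hom (A i) (A j)) (X : ob C)
  (c : forall j, hom (A j) X) : Prop :=
  IsCocone m c /\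
  forall Y (c' : forall j, hom (A j) Y), IsCocone m c' ->
    exists! h : hom X Y, forall j, comp h (c j) = c' j.

Definition Cocomplete (C : kCat k) : Prop :=
  forall (J : Cat) (D : Diagram J C),
    exists X (c : forall j, hom (dob D j) X), IsColimit (@dmap _ _ D) c.

Definition Filtered (J : Cat) : Prop :=
  inhabited (cob J) /\
  (forall i j : cob J, exists l, inhabited (chom J i l) /\ inhabited (chom J j l)) /\
  (forall i j (u v : chom J i j), exists l (w : chom J j l), ccomp w u = ccomp w v).

Definition Mono (C : kCat k) (a b : ob C) (f : hom a b) : Prop :=
  forall z (g h : hom z a), comp f g = comp f h -> g = h.

Definition Epi (C : kCat k) (a b : ob C) (f : hom a b) : Prop :=
  forall z (g h : hom b z), comp g f = comp h f -> g = h.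

Definition IsKernel (C : kCat k) (a b K : ob C) (f : hom a b) (i : hom K a) : Prop :=
  comp f i = 0 /\
  forall Z (g : hom Z a), comp f g = 0 -> exists! u : hom Z K, comp i u = g.

Definition IsCokernel (C : kCat k) (a b Q : ob C) (f : hom a b) (q : hom b Q) : Prop :=
  comp q f = 0 /\
  forall Z (g : hom b Z), comp g f = 0 -> exists! u : hom Q Z, comp u q = g.

Definition IsZeroObject (C : kCat k) (z : ob C) : Prop :=
  forall a : ob C, (forall f g : hom z a, f = g) /\ (forall f g : hom a z, f = g).

Definition IsBiproduct (C : kCat k) (a b p : ob C)
  (i1 : hom a p) (i2 : hom b p) (p1 : hom p a) (p2 : hom p b) : Prop :=
  comp p1 i1 = idm a /\ comp p2 i2 = idm b /\ comp p1 i2 = 0 /\ comp p2 i1 = 0 /\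
  comp i1 p1 + comp i2 p2 = idm p.

Definition Abelian (C : kCat k) : Prop :=
  (exists z : ob C, IsZeroObject z) /\
  (forall a b : ob C, exists p (i1 : hom a p) (i2 : hom b p) p1 p2,
      IsBiproduct i1 i2 p1 p2) /\
  (forall (a b : ob C) (f : hom a b), exists K (i : hom K a), IsKernel f i) /\
  (forall (a b : ob C) (f : hom a b), exists Q (q : hom b Q), IsCokernel f q) /\
  (forall (a b : ob C) (f : hom a b), Mono f ->
      exists Z (g : hom b Z), IsKernel g f) /\
  (forall (a b : ob C) (f : hom a b), Epi f ->
      exists Z (g : hom Z a), IsCokernel g f).

(* AB5: filtered colimits are exact, i.e. (in a cocomplete abelian category)
   a filtered colimit of monomorphisms is a monomorphism *)
Definition AB5 (C : kCat k) : Prop :=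
  forall (J : Cat), Filtered J ->
  forall (D1 D2 : Diagram J C) (al : forall j, hom (dob D1 j) (dob D2 j)),
    (forall i j (u : chom J i j),
        comp (al j) (dmap D1 u) = comp (dmap D2 u) (al i)) ->
    (forall j, Mono (al j)) ->
    forall X1 (c1 : forall j, hom (dob D1 j) X1) X2 (c2 : forall j, hom (dob D2 j) X2),
      IsColimit (@dmap _ _ D1) c1 -> IsColimit (@dmap _ _ D2) c2 ->
      forall h : hom X1 X2, (forall j, comp h (c1 j) = comp (c2 j) (al j)) ->
      Mono h.

Definition HasGenerator (C : kCat k) : Prop :=
  exists G : ob C, forall (a b : ob C) (f g : hom a b),
    (forall h : hom G a, comp f h = comp g h) -> f = g.

Definition Grothendieck (C : kCat k) : Prop :=
  Abelian C /\ Cocomplete C /\ AB5 C /\ HasGenerator C.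

Record kFunctor (C D : kCat k) := {
  fob : ob C -> ob D;
  fmap : forall a b, hom a b -> hom (fob a) (fob b);
  fmap_id : forall a, fmap (idm a) = idm (fob a);
  fmap_comp : forall a b c (f : hom a b) (g : hom b c),
      fmap (comp g f) = comp (fmap g) (fmap f);
  fmap_lin : forall a b (r : k) (f g : hom a b),
      fmap (r *: f + g) = r *: fmap f + fmap g }.

Definition PreservesColimits (C D : kCat k) (F : kFunctor C D) : Prop :=
  forall (J : Cat) (A : cob J -> ob C) (m : forall i j, chom J i j -> hom (A i) (A j))
    (X : ob C) (c : forall j, hom (A j) X),
    IsColimit m c ->
    IsColimit (fun i j u => fmap F (m i j u)) (fun j => fmap F (c j)).

Definition LeftAdjoint (C D : kCat k) (L : kFunctor D C) (F : kFunctor C D) : Prop :=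
  exists (eta : forall d, hom d (fob F (fob L d)))
         (eps : forall c, hom (fob L (fob F c)) c),
    (forall d d' (f : hom d d'),
        comp (eta d') f = comp (fmap F (fmap L f)) (eta d)) /\
    (forall c c' (f : hom c c'),
        comp f (eps c) = comp (eps c') (fmap L (fmap F f))) /\
    (forall d, comp (eps (fob L d)) (fmap L (eta d)) = idm (fob L d)) /\
    (forall c, comp (fmap F (eps c)) (eta (fob F c)) = idm (fob F c)).

Definition IsCoproduct (C : kCat k) (n : nat) (A : 'I_n -> ob C) (P : ob C)
  (inj : forall i, hom (A i) P) : Prop :=
  forall Z (f : forall i, hom (A i) Z),
    exists! u : hom P Z, forall i, comp u (inj i) = f i.
Arguments IsCoproduct {C n} A {P} inj.

(* P d (with injections iota d) is a coproduct of n copies of Y X d, so that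
   d |-> P d is the functor coprod^n YX (on morphisms f the induced map g with
   g \o iota d i = iota d' i \o YXf); similarly Q c is coprod^n XY c.
   eta : id => coprod^n YX, zeta : coprod^n XY => id, and the condition
   zeta_{Xd} \o X eta_d = id uses the canonical iso X(coprod YXd) = coprod XYXd,
   i.e. the map psi with psi \o X(iota d i) = kappa (X d) i. *)
Definition LeftQuasiAdjoint (C D : kCat k) (X : kFunctor D C) (Y : kFunctor C D) : Prop :=
  exists (n : nat)
    (P : ob D -> ob D) (iota : forall d (i : 'I_n), hom (fob Y (fob X d)) (P d))
    (Q : ob C -> ob C) (kappa : forall c (i : 'I_n), hom (fob X (fob Y c)) (Q c))
    (eta : forall d, hom d (P d)) (zeta : forall c, hom (Q c) c),
    (forall d, IsCoproduct (fun _ => fob Y (fob X d)) (iota d)) /\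
    (forall c, IsCoproduct (fun _ => fob X (fob Y c)) (kappa c)) /\
    (forall d d' (f : hom d d') (g : hom (P d) (P d')),
        (forall i, comp g (iota d i) = comp (iota d' i) (fmap Y (fmap X f))) ->
        comp (eta d') f = comp g (eta d)) /\
    (forall c c' (f : hom c c') (g : hom (Q c) (Q c')),
        (forall i, comp g (kappa c i) = comp (kappa c' i) (fmap X (fmap Y f))) ->
        comp f (zeta c) = comp (zeta c') g) /\
    (forall d (psi : hom (fob X (P d)) (Q (fob X d))),
        (forall i, comp psi (fmap X (iota d i)) = kappa (fob X d) i) ->
        comp (zeta (fob X d)) (comp psi (fmap X (eta d))) = idm (fob X d)).

(* R : D -> C is a direct summand of L^n = coprod_{i<n} L in the category of
   k-linear functors D -> C: P d (with injections iota d) is a coproduct of n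
   copies of L d (the functor L^n), a : R => L^n, b : L^n => R natural, b \o a = id. *)
Definition SummandOfCopies (C D : kCat k) (R L : kFunctor D C) : Prop :=
  exists (n : nat)
    (P : ob D -> ob C) (iota : forall d (i : 'I_n), hom (fob L d) (P d))
    (a : forall d, hom (fob R d) (P d)) (b : forall d, hom (P d) (fob R d)),
    (forall d, IsCoproduct (fun _ => fob L d) (iota d)) /\
    (forall d d' (f : hom d d') (g : hom (P d) (P d')),
        (forall i, comp g (iota d i) = comp (iota d' i) (fmap L f)) ->
        comp (a d') (fmap R f) = comp g (a d)) /\
    (forall d d' (f : hom d d') (g : hom (P d) (P d')),
        (forall i, comp g (iota d i) = comp (iota d' i) (fmap L f)) ->
        comp (fmap R f) (b d) = comp (b d') g) /\
    (forall d, comp (b d) (a d) = idm (fob R d)).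

End Cats.

From Pilot Require Import Defs.
From mathcomp Require Import all_boot all_algebra.
From Stdlib Require Import ClassicalEpsilon.
Import Pilot.Defs.
Set Implicit Arguments.
Unset Strict Implicit.
Unset Printing Implicit Defensive.
Import GRing.Theory.
Local Open Scope ring_scope.

(* A natural transformation into (or out of) a finite biproduct of copies of a
   functor is the same thing as a finite family of natural transformations into
   (or out of) that functor.  In these terms, (i) and (ii) are exchanged by
   taking mates along L -| F, and (ii) and (iii) by taking mates along F -| R;
   the triangle identities turn each splitting identity into the other. *)

Section LinearCategory.
Variable k : comPzRingType.

Lemma comp_addl (C : kCat k) (a b c : ob C) (f : hom a b) (g h : hom b c) :
  comp (g + h) f = comp g f + comp h f.
Proof. by have := comp_linl f 1 g h; rewrite !scale1r. Qed.

Lemma comp_addr (C : kCat k) (a b c : ob C) (h : hom b c) (f g : hom a b) :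
  comp h (f + g) = comp h f + comp h g.
Proof. by have := comp_linr h 1 f g; rewrite !scale1r. Qed.

Lemma comp0l (C : kCat k) (a b c : ob C) (f : hom a b) : comp (0 : hom b c) f = 0.
Proof. by apply: (addrI (comp 0 f)); rewrite -comp_addl !addr0. Qed.

Lemma comp0r (C : kCat k) (a b c : ob C) (h : hom b c) : comp h (0 : hom a b) = 0.
Proof. by apply: (addrI (comp h 0)); rewrite -comp_addr !addr0. Qed.

Lemma comp_suml (C : kCat k) (a b c : ob C) (f : hom a b) n (g : 'I_n -> hom b c) :
  comp (\sum_i g i) f = \sum_i comp (g i) f.
Proof. by apply: (big_morph (fun x => comp x f)) => [x y|]; rewrite ?comp_addl ?comp0l. Qed.

Lemma comp_sumr (C : kCat k) (a b c : ob C) (h : hom b c) n (g : 'I_n -> hom a b) :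
  comp h (\sum_i g i) = \sum_i comp h (g i).
Proof. by apply: (big_morph (comp h)) => [x y|]; rewrite ?comp_addr ?comp0r. Qed.

Lemma fmap_add (C D : kCat k) (F : kFunctor C D) (a b : ob C) (f g : hom a b) :
  fmap F (f + g) = fmap F f + fmap F g.
Proof. by have := fmap_lin F 1 f g; rewrite !scale1r. Qed.

Lemma fmap0 (C D : kCat k) (F : kFunctor C D) (a b : ob C) : fmap F (0 : hom a b) = 0.
Proof. by apply: (addrI (fmap F 0)); rewrite -fmap_add !addr0. Qed.

Lemma fmap_sum (C D : kCat k) (F : kFunctor C D) (a b : ob C) n (g : 'I_n -> hom a b) :
  fmap F (\sum_i g i) = \sum_i fmap F (g i).
Proof. by apply: (big_morph (@fmap _ _ _ F a b)) => [x y|]; rewrite ?fmap_add ?fmap0. Qed.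

End LinearCategory.

Section BiproductPower.
Variable k : comPzRingType.

Record IsBiproductPower (C : kCat k) n (A P : ob C)
    (inj : 'I_n -> hom A P) (pr : 'I_n -> hom P A) : Prop := {
  biprod_pr_inj : forall i j, comp (pr i) (inj j) = if i == j then idm A else 0;
  biprod_sum : \sum_i comp (inj i) (pr i) = idm P }.

Section Laws.
Variables (C : kCat k) (n : nat) (A P : ob C).
Variables (inj : 'I_n -> hom A P) (pr : 'I_n -> hom P A).
Hypothesis HP : IsBiproductPower inj pr.

Lemma biprod_copairK (B : ob C) (h : 'I_n -> hom A B) i :
  comp (\sum_j comp (h j) (pr j)) (inj i) = h i.
Proof.
rewrite comp_suml (eq_bigr (fun j => if j == i then h i else 0)).
  by rewrite -big_mkcond big_pred1_eq.
move=> j _; rewrite -comp_assoc (biprod_pr_inj HP).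
by case: eqP => [->|_]; [exact: comp_idr | exact: comp0r].
Qed.

Lemma biprod_pairK (B : ob C) (h : 'I_n -> hom B A) i :
  comp (pr i) (\sum_j comp (inj j) (h j)) = h i.
Proof.
rewrite comp_sumr (eq_bigr (fun j => if j == i then h i else 0)).
  by rewrite -big_mkcond big_pred1_eq.
move=> j _; rewrite comp_assoc (biprod_pr_inj HP) eq_sym.
by case: eqP => [->|_]; [exact: comp_idl | exact: comp0l].
Qed.

Lemma biprod_expandl (B : ob C) (g : hom P B) :
  g = \sum_j comp (comp g (inj j)) (pr j).
Proof.
rewrite -{1}(comp_idr g) -(biprod_sum HP) comp_sumr.
by apply: eq_bigr => j _; rewrite comp_assoc.
Qed.

Lemma biprod_expandr (B : ob C) (g : hom B P) :
  g = \sum_j comp (inj j) (comp (pr j) g).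
Proof.
rewrite -{1}(comp_idl g) -(biprod_sum HP) comp_suml.
by apply: eq_bigr => j _; rewrite comp_assoc.
Qed.

Lemma biproduct_coproduct : IsCoproduct (A := fun _ => A) inj.
Proof.
move=> Z f; exists (\sum_j comp (f j) (pr j)); split=> [i|u Hu].
  exact: biprod_copairK.
by rewrite (biprod_expandl u); apply: eq_bigr => j _; rewrite Hu.
Qed.

Lemma fmap_biproduct (D : kCat k) (F : kFunctor C D) :
  IsBiproductPower (fun i => fmap F (inj i)) (fun i => fmap F (pr i)).
Proof.
split=> [i j|].
  by rewrite -fmap_comp (biprod_pr_inj HP); case: eqP; rewrite ?fmap_id ?fmap0.
by rewrite -fmap_id -(biprod_sum HP) fmap_sum; apply: eq_bigr => i _; rewrite fmap_comp.
Qed.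

End Laws.

Lemma biprod_map_pr (C : kCat k) n (A P A' P' : ob C) inj pr inj' pr'
    (h : hom A A') (g : hom P P') :
  @IsBiproductPower C n A P inj pr -> @IsBiproductPower C n A' P' inj' pr' ->
  (forall j, comp g (inj j) = comp (inj' j) h) ->
  forall i, comp (pr' i) g = comp h (pr i).
Proof.
move=> HP HP' Hg i; rewrite (biprod_expandl HP g).
under eq_bigr do rewrite Hg -comp_assoc.
exact: (biprod_pairK HP').
Qed.

Lemma coproduct_biproduct (C : kCat k) n (A P : ob C) (inj : 'I_n -> hom A P) :
  IsCoproduct (A := fun _ => A) inj -> exists pr, IsBiproductPower inj pr.
Proof.
move=> H.
have [pr Hpr] : exists pr : 'I_n -> hom P A,
    forall i j, comp (pr i) (inj j) = if i == j then idm A else 0.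
  apply: (fin_all_exists (P := fun i (p : hom P A) => forall j,
             comp p (inj j) = if i == j then idm A else 0)) => i.
  by have [u [Hu _]] := H A (fun j => if i == j then idm A else 0); exists u.
exists pr; split=> //.
have [u [_ Hu]] := H P inj.
rewrite -(Hu (idm P)) => [|i]; last by rewrite comp_idl.
apply/esym/Hu => i; rewrite comp_suml (eq_bigr (fun j => if j == i then inj i else 0)).
  by rewrite -big_mkcond big_pred1_eq.
move=> j _; rewrite -comp_assoc Hpr.
by case: eqP => [->|_]; [exact: comp_idr | exact: comp0r].
Qed.

Lemma coproduct_family_biproduct (C : kCat k) (I : Type) n (A P : I -> ob C)
    (inj : forall d, 'I_n -> hom (A d) (P d)) :
  (forall d, IsCoproduct (A := fun _ => A d) (inj d)) ->
  exists pr : forall d, 'I_n -> hom (P d) (A d), forall d, IsBiproductPower (inj d) (pr d).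
Proof.
move=> H; pose c d := constructive_indefinite_description _ (coproduct_biproduct (H d)).
by exists (fun d => proj1_sig (c d)) => d; exact: proj2_sig (c d).
Qed.

Definition Additive (C : kCat k) : Prop :=
  (exists z : ob C, IsZeroObject z) /\
  (forall a b : ob C, exists p (i1 : hom a p) (i2 : hom b p) p1 p2,
      IsBiproduct i1 i2 p1 p2).

Lemma abelian_additive (C : kCat k) : Abelian C -> Additive C.
Proof. by case=> ? []. Qed.

Lemma biproduct_power0 (C : kCat k) (A z : ob C) :
  IsZeroObject z -> IsBiproductPower (fun _ : 'I_0 => 0 : hom A z) (fun _ => 0).
Proof. by move=> Hz; split=> [[]//|]; rewrite big_ord0; apply: (Hz z).1. Qed.

(* Copy 0 is the second summand of the binary biproduct, copy j+1 is copy j of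
   the first one. *)
Lemma biproduct_powerS (C : kCat k) n (A P p : ob C) (inj : 'I_n -> hom A P) pr
    (i1 : hom P p) (i2 : hom A p) p1 p2 :
  IsBiproductPower inj pr -> IsBiproduct i1 i2 p1 p2 ->
  IsBiproductPower
    (fun i : 'I_n.+1 => if unlift ord0 i is Some j then comp i1 (inj j) else i2)
    (fun i : 'I_n.+1 => if unlift ord0 i is Some j then comp (pr j) p1 else p2).
Proof.
move=> HP [B1 [B2 [B3 [B4 B5]]]]; split=> [i j|].
  case: (unliftP ord0 i) => [i'|] ->; case: (unliftP ord0 j) => [j'|] ->;
    rewrite ?liftK ?unlift_none ?eqxx.
  - rewrite (inj_eq (@lift_inj _ ord0)) -(biprod_pr_inj HP) comp_assoc.
    by rewrite -[comp (comp _ p1) i1]comp_assoc B1 comp_idr.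
  - by rewrite eq_sym (negbTE (neq_lift _ _)) -comp_assoc B3 comp0r.
  - by rewrite (negbTE (neq_lift _ _)) comp_assoc B4 comp0l.
  - exact: B2.
rewrite big_ord_recl unlift_none.
under eq_bigr do rewrite liftK -comp_assoc [comp (inj _) _]comp_assoc.
by rewrite -comp_sumr -comp_suml (biprod_sum HP) comp_idl addrC.
Qed.

Record BiproductPower (C : kCat k) n (A : ob C) := {
  bp_ob : ob C;
  bp_inj : 'I_n -> hom A bp_ob;
  bp_pr : 'I_n -> hom bp_ob A;
  bp_spec : IsBiproductPower bp_inj bp_pr }.

Lemma biproduct_power_exists (C : kCat k) n (A : ob C) :
  Additive C -> inhabited (BiproductPower n A).
Proof.
move=> [[z Hz] Hbip]; elim: n => [|n [X]].
  exact: inhabits (Build_BiproductPower (biproduct_power0 A Hz)).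
have [p [i1 [i2 [p1 [p2 Hp]]]]] := Hbip (bp_ob X) A.
exact: inhabits (Build_BiproductPower (biproduct_powerS (bp_spec X) Hp)).
Qed.

Lemma biproduct_power_family (C : kCat k) (I : Type) n (A : I -> ob C) :
  Additive C -> inhabited (forall d, BiproductPower n (A d)).
Proof.
move=> HC; constructor=> d.
exact: epsilon (biproduct_power_exists n (A d) HC) (fun _ => True).
Qed.

End BiproductPower.

Section PowerNaturality.
Variables (k : comPzRingType) (C D : kCat k) (S T : ob D -> ob C).
Variables (Smap : forall d d', hom d d' -> hom (S d) (S d'))
          (Tmap : forall d d', hom d d' -> hom (T d) (T d')).
Variables (n : nat) (P : ob D -> ob C).
Variables (inj : forall d, 'I_n -> hom (T d) (P d)) (pr : forall d, 'I_n -> hom (P d) (T d)).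
Hypothesis HP : forall d, IsBiproductPower (inj d) (pr d).

Lemma natural_into_powerP (a : forall d, hom (S d) (P d)) :
  (forall d d' (f : hom d d') (g : hom (P d) (P d')),
      (forall i, comp g (inj d i) = comp (inj d' i) (Tmap f)) ->
      comp (a d') (Smap f) = comp g (a d)) <->
  (forall i d d' (f : hom d d'),
      comp (comp (pr d' i) (a d')) (Smap f) = comp (Tmap f) (comp (pr d i) (a d))).
Proof.
split=> Ha.
  move=> i d d' f; have Hg := biprod_copairK (HP d) (fun j => comp (inj d' j) (Tmap f)).
  rewrite -comp_assoc (Ha _ _ f _ Hg) comp_assoc.
  by rewrite (biprod_map_pr (HP d) (HP d') Hg) comp_assoc.
move=> d d' f g Hg; rewrite (biprod_expandr (HP d') (a d')) (biprod_expandr (HP d) (a d)).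
rewrite comp_suml comp_sumr; apply: eq_bigr => i _.
by rewrite -comp_assoc Ha comp_assoc -Hg !comp_assoc.
Qed.

Lemma natural_out_of_powerP (b : forall d, hom (P d) (S d)) :
  (forall d d' (f : hom d d') (g : hom (P d) (P d')),
      (forall i, comp g (inj d i) = comp (inj d' i) (Tmap f)) ->
      comp (Smap f) (b d) = comp (b d') g) <->
  (forall i d d' (f : hom d d'),
      comp (Smap f) (comp (b d) (inj d i)) = comp (comp (b d') (inj d' i)) (Tmap f)).
Proof.
split=> Hb.
  move=> i d d' f; have Hg := biprod_copairK (HP d) (fun j => comp (inj d' j) (Tmap f)).
  by rewrite comp_assoc (Hb _ _ f _ Hg) -comp_assoc Hg comp_assoc.
move=> d d' f g Hg; rewrite (biprod_expandl (HP d) (b d)) (biprod_expandl (HP d') (b d')).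
rewrite comp_sumr comp_suml; apply: eq_bigr => i _.
by rewrite comp_assoc Hb -!comp_assoc (biprod_map_pr (HP d) (HP d') Hg).
Qed.

End PowerNaturality.

Record QuasiAdjointFamily (k : comPzRingType) (C D : kCat k) (X : kFunctor D C) (Y : kFunctor C D) n
    (eta : 'I_n -> forall d, hom d (fob Y (fob X d)))
    (zeta : 'I_n -> forall c, hom (fob X (fob Y c)) c) : Prop := {
  qaf_unit_natural : forall i d d' (f : hom d d'),
    comp (eta i d') f = comp (fmap Y (fmap X f)) (eta i d);
  qaf_counit_natural : forall i c c' (f : hom c c'),
    comp f (zeta i c) = comp (zeta i c') (fmap X (fmap Y f));
  qaf_triangle : forall d,
    \sum_i comp (zeta i (fob X d)) (fmap X (eta i d)) = idm (fob X d) }.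
Arguments QuasiAdjointFamily {k C D} X Y n eta zeta.

Record SummandFamily (k : comPzRingType) (C D : kCat k) (R L : kFunctor D C) n
    (a : 'I_n -> forall d, hom (fob R d) (fob L d))
    (b : 'I_n -> forall d, hom (fob L d) (fob R d)) : Prop := {
  sf_in_natural : forall i d d' (f : hom d d'),
    comp (a i d') (fmap R f) = comp (fmap L f) (a i d);
  sf_out_natural : forall i d d' (f : hom d d'),
    comp (fmap R f) (b i d) = comp (b i d') (fmap L f);
  sf_split : forall d, \sum_i comp (b i d) (a i d) = idm (fob R d) }.
Arguments SummandFamily {k C D} R L n a b.

Section Families.
Variable k : comPzRingType.

Section QuasiAdjoint.
Variables (C D : kCat k) (X : kFunctor D C) (Y : kFunctor C D).

Lemma leftQuasiAdjoint_family :
  LeftQuasiAdjoint X Y -> exists n eta zeta, QuasiAdjointFamily X Y n eta zeta.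
Proof.
case=> n [P [iota [Q [kappa [eta [zeta [HP [HQ [Heta [Hzeta Htri]]]]]]]]]].
have [prP HprP] := coproduct_family_biproduct HP.
have [prQ HprQ] := coproduct_family_biproduct HQ.
exists n, (fun i d => comp (prP d i) (eta d)), (fun i c => comp (zeta c) (kappa c i)).
split.
- exact: (natural_into_powerP (fun _ _ f => f) (fun _ _ f => fmap Y (fmap X f)) HprP _).1.
- exact: (natural_out_of_powerP (fun _ _ f => f) (fun _ _ f => fmap X (fmap Y f)) HprQ _).1.
move=> d; pose psi := \sum_j comp (kappa (fob X d) j) (fmap X (prP d j)).
rewrite -(Htri d psi (biprod_copairK (fmap_biproduct (HprP d) X) _)) comp_suml.
by rewrite comp_sumr; apply: eq_bigr => i _; rewrite fmap_comp !comp_assoc.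
Qed.

Lemma family_leftQuasiAdjoint : Additive C -> Additive D ->
  (exists n eta zeta, QuasiAdjointFamily X Y n eta zeta) -> LeftQuasiAdjoint X Y.
Proof.
move=> HC HD [n [eta [zeta [Heta Hzeta Htri]]]].
have [BP] := biproduct_power_family n (fun d => fob Y (fob X d)) HD.
have [BQ] := biproduct_power_family n (fun c => fob X (fob Y c)) HC.
have HP d := bp_spec (BP d); have HQ c := bp_spec (BQ c).
exists n, (fun d => bp_ob (BP d)), (fun d => bp_inj (BP d)),
  (fun c => bp_ob (BQ c)), (fun c => bp_inj (BQ c)),
  (fun d => \sum_i comp (bp_inj (BP d) i) (eta i d)),
  (fun c => \sum_i comp (zeta i c) (bp_pr (BQ c) i)).
split; first by move=> d; exact: biproduct_coproduct.
split; first by move=> c; exact: biproduct_coproduct.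
split.
  apply/(natural_into_powerP (fun _ _ f => f) (fun _ _ f => fmap Y (fmap X f)) HP _).
  by move=> i d d' f; rewrite !(biprod_pairK (HP _)) Heta.
split.
  apply/(natural_out_of_powerP (fun _ _ f => f) (fun _ _ f => fmap X (fmap Y f)) HQ _).
  by move=> i c c' f; rewrite !(biprod_copairK (HQ _)) Hzeta.
move=> d psi Hpsi; rewrite -(Htri d) fmap_sum !comp_sumr; apply: eq_bigr => i _.
by rewrite fmap_comp (comp_assoc _ _ psi) Hpsi comp_assoc (biprod_copairK (HQ _)).
Qed.

End QuasiAdjoint.

Section Summand.
Variables (C D : kCat k) (R L : kFunctor D C).

Lemma summandOfCopies_family :
  SummandOfCopies R L -> exists n a b, SummandFamily R L n a b.
Proof.
case=> n [P [iota [a [b [HP [Ha [Hb Hba]]]]]]].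
have [pr Hpr] := coproduct_family_biproduct HP.
exists n, (fun i d => comp (pr d i) (a d)), (fun i d => comp (b d) (iota d i)).
split.
- exact: (natural_into_powerP (fun _ _ f => fmap R f) (fun _ _ f => fmap L f) Hpr _).1.
- exact: (natural_out_of_powerP (fun _ _ f => fmap R f) (fun _ _ f => fmap L f) Hpr _).1.
move=> d; rewrite -(Hba d) {2}(biprod_expandr (Hpr d) (a d)) comp_sumr.
by apply: eq_bigr => i _; rewrite !comp_assoc.
Qed.

Lemma family_summandOfCopies : Additive C ->
  (exists n a b, SummandFamily R L n a b) -> SummandOfCopies R L.
Proof.
move=> HC [n [a [b [Ha Hb Hba]]]].
have [B] := biproduct_power_family n (fob L) HC.
have HP d := bp_spec (B d).
exists n, (fun d => bp_ob (B d)), (fun d => bp_inj (B d)),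
  (fun d => \sum_i comp (bp_inj (B d) i) (a i d)),
  (fun d => \sum_i comp (b i d) (bp_pr (B d) i)).
split; first by move=> d; exact: biproduct_coproduct.
split.
  apply/(natural_into_powerP (fun _ _ f => fmap R f) (fun _ _ f => fmap L f) HP _).
  by move=> i d d' f; rewrite !(biprod_pairK (HP _)) Ha.
split.
  apply/(natural_out_of_powerP (fun _ _ f => fmap R f) (fun _ _ f => fmap L f) HP _).
  by move=> i d d' f; rewrite !(biprod_copairK (HP _)) Hb.
move=> d; rewrite -(Hba d) comp_suml; apply: eq_bigr => i _.
by rewrite -comp_assoc (biprod_pairK (HP d)).
Qed.

End Summand.

End Families.

Section Mates.
Variables (k : comPzRingType) (C D : kCat k) (G : kFunctor D C) (H : kFunctor C D).
Variables (unit : forall d, hom d (fob H (fob G d))) (counit : forall c, hom (fob G (fob H c)) c).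
Hypothesis unit_natural : forall d d' (f : hom d d'),
  comp (unit d') f = comp (fmap H (fmap G f)) (unit d).
Hypothesis counit_natural : forall c c' (f : hom c c'),
  comp f (counit c) = comp (counit c') (fmap G (fmap H f)).
Hypothesis triangleG : forall d, comp (counit (fob G d)) (fmap G (unit d)) = idm (fob G d).
Hypothesis triangleH : forall c, comp (fmap H (counit c)) (unit (fob H c)) = idm (fob H c).

Lemma qaf_right_to_summand (K : kFunctor D C) n eta zeta :
  QuasiAdjointFamily K H n eta zeta ->
  SummandFamily K G n (fun i d => comp (zeta i (fob G d)) (fmap K (unit d)))
                      (fun i d => comp (counit (fob K d)) (fmap G (eta i d))).
Proof.
case=> Heta Hzeta Htri; split=> [i d d' f|i d d' f|d].
- rewrite -comp_assoc -fmap_comp unit_natural fmap_comp comp_assoc -Hzeta.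
  by rewrite !comp_assoc.
- rewrite comp_assoc counit_natural -comp_assoc -fmap_comp -Heta fmap_comp.
  by rewrite !comp_assoc.
rewrite -(Htri d); apply: eq_bigr => i _.
have mate_eta : comp (fmap H (comp (counit (fob K d)) (fmap G (eta i d)))) (unit d) = eta i d.
  by rewrite fmap_comp -comp_assoc -unit_natural comp_assoc triangleH comp_idl.
by rewrite comp_assoc Hzeta -comp_assoc -fmap_comp mate_eta.
Qed.

Lemma summand_to_qaf_right (K : kFunctor D C) n a b :
  SummandFamily K G n a b ->
  QuasiAdjointFamily K H n (fun i d => comp (fmap H (b i d)) (unit d))
                           (fun i c => comp (counit c) (a i (fob H c))).
Proof.
case=> Ha Hb Hba; split=> [i d d' f|i c c' f|d].
- rewrite -comp_assoc unit_natural comp_assoc -fmap_comp -Hb fmap_comp.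
  by rewrite !comp_assoc.
- by rewrite comp_assoc counit_natural -comp_assoc -Ha !comp_assoc.
rewrite -(Hba d); apply: eq_bigr => i _.
have mate_b : comp (counit (fob K d)) (fmap G (comp (fmap H (b i d)) (unit d))) = b i d.
  by rewrite fmap_comp comp_assoc -counit_natural -comp_assoc triangleG comp_idr.
by rewrite -comp_assoc Ha comp_assoc mate_b.
Qed.

Lemma summand_to_qaf_left (K : kFunctor C D) n a b :
  SummandFamily H K n a b ->
  QuasiAdjointFamily G K n (fun i d => comp (a i (fob G d)) (unit d))
                           (fun i c => comp (counit c) (fmap G (b i c))).
Proof.
case=> Ha Hb Hba; split=> [i d d' f|i c c' f|d].
- by rewrite -comp_assoc unit_natural comp_assoc Ha !comp_assoc.
- rewrite comp_assoc counit_natural -comp_assoc -fmap_comp Hb fmap_comp.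
  by rewrite !comp_assoc.
transitivity (comp (counit (fob G d))
   (comp (fmap G (\sum_i comp (b i (fob G d)) (a i (fob G d)))) (fmap G (unit d)))).
  rewrite fmap_sum comp_suml comp_sumr; apply: eq_bigr => i _.
  by rewrite !fmap_comp !comp_assoc.
by rewrite Hba fmap_id comp_idl triangleG.
Qed.

Lemma qaf_left_to_summand (K : kFunctor C D) n eta zeta :
  QuasiAdjointFamily G K n eta zeta ->
  SummandFamily H K n (fun i c => comp (fmap K (counit c)) (eta i (fob H c)))
                      (fun i c => comp (fmap H (zeta i c)) (unit (fob K c))).
Proof.
case=> Heta Hzeta Htri; split=> [i c c' f|i c c' f|c].
- rewrite -comp_assoc Heta comp_assoc -fmap_comp -counit_natural fmap_comp.
  by rewrite !comp_assoc.
- rewrite comp_assoc -fmap_comp Hzeta fmap_comp -comp_assoc -unit_natural.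
  by rewrite !comp_assoc.
pose GHc := fob G (fob H c).
transitivity (comp (fmap H (counit c))
   (comp (fmap H (\sum_i comp (zeta i GHc) (fmap G (eta i (fob H c))))) (unit (fob H c))));
  last by rewrite Htri fmap_id comp_idl triangleH.
rewrite fmap_sum comp_suml comp_sumr; apply: eq_bigr => i _.
have zeta_natural : comp (fmap H (zeta i c)) (fmap H (fmap G (fmap K (counit c)))) =
    comp (fmap H (counit c)) (fmap H (zeta i GHc)) by rewrite -!fmap_comp Hzeta.
rewrite -comp_assoc [comp (unit _) _]comp_assoc unit_natural -comp_assoc comp_assoc.
by rewrite zeta_natural unit_natural fmap_comp !comp_assoc.
Qed.

End Mates.

Theorem theorem2p5 (k : comPzRingType) (C D : kCat k)
  (F : kFunctor C D) (L R : kFunctor D C) :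
  Grothendieck C -> Grothendieck D ->
  PreservesColimits F -> PreservesColimits L -> PreservesColimits R ->
  LeftAdjoint L F -> LeftAdjoint F R ->
  (LeftQuasiAdjoint R F <-> SummandOfCopies R L) /\
  (SummandOfCopies R L <-> LeftQuasiAdjoint F L).
Proof.
move=> [HC _] [HD _] _ _ _ [u1 [c1 [N1 [N1' [T1 T1']]]]] [u2 [c2 [N2 [N2' [T2 T2']]]]].
have HC' := abelian_additive HC; have HD' := abelian_additive HD.
split; split.
- move=> /leftQuasiAdjoint_family [n [eta [zeta H]]]; apply: family_summandOfCopies HC' _.
  by have := qaf_right_to_summand N1 N1' T1' H; eauto.
- move=> /summandOfCopies_family [n [a [b H]]]; apply: family_leftQuasiAdjoint HC' HD' _.
  by have := summand_to_qaf_right N1 N1' T1 H; eauto.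
- move=> /summandOfCopies_family [n [a [b H]]]; apply: family_leftQuasiAdjoint HD' HC' _.
  by have := summand_to_qaf_left N2 N2' T2 H; eauto.
- move=> /leftQuasiAdjoint_family [n [eta [zeta H]]]; apply: family_summandOfCopies HC' _.
  by have := qaf_left_to_summand N2 N2' T2' H; eauto.
Qed.
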